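(* Let $P=(U,R)$ be a partial order. Then $P$ is a linear order if and only if $NC(P)$ is a chain graph.
   Context: For $U=\{u_1,\dots,u_n\}$ and a disjoint copy $V=\{v_1,\dots,v_n\}$, $NC(P)=(U,V,E)$ is the bipartite graph with $u_iv_j\in E$ iff $u_i\le_P u_j$ (i.e. $u_i<_Pu_j$ or $i=j$). A bipartite graph is a chain graph if, for any two vertices in the same color class, one neighborhood contains the other. A linear order is a partial order in which every two distinct elements are comparable. *)

From HB Require Import structures.
From mathcomp Require Import all_boot.
Set Implicit Arguments. Unset Strict Implicit. Unset Printing Implicit Defensive.

Definition partial_order (T : finType) (le : rel T) : Prop :=
  reflexive le /\ antisymmetric le /\ transitive le.

Definition linear_order (T : finType) (le : rel T) : Prop :=
  partial_order le /\ forall x y : T, x != y -> le x y || le y x.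

Record bigraph := BiGraph {
  bg_left : finType;
  bg_right : finType;
  bg_edge : bg_left -> bg_right -> bool }.

Definition nbhd_left (G : bigraph) (a : bg_left G) : {set bg_right G} :=
  [set b | bg_edge a b].
Definition nbhd_right (G : bigraph) (b : bg_right G) : {set bg_left G} :=
  [set a | bg_edge a b].

Definition chain_graph (G : bigraph) : Prop :=
  (forall a1 a2 : bg_left G,
      (nbhd_left a1 \subset nbhd_left a2) || (nbhd_left a2 \subset nbhd_left a1)) /\
  (forall b1 b2 : bg_right G,
      (nbhd_right b1 \subset nbhd_right b2) || (nbhd_right b2 \subset nbhd_right b1)).

(* Disjoint copy V of the ground set U = T. *)
Inductive vcopy (T : Type) := VCopy of T.
Definition vcopy_val (T : Type) (v : vcopy T) : T := let: VCopy x := v in x.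
Lemma vcopy_valK (T : Type) : cancel (@vcopy_val T) (@VCopy T).
Proof. by case. Qed.
HB.instance Definition _ (T : finType) := Finite.copy (vcopy T) (can_type (@vcopy_valK T)).

Definition NC (T : finType) (le : rel T) : bigraph :=
  @BiGraph T (vcopy T) (fun u v => le u (vcopy_val v)).

From mathcomp Require Import all_boot.

Set Implicit Arguments.

(* Neighbourhoods in NC(P) are up-sets (on the U side) and down-sets (on the V
   side) of P, so they are nested exactly when the points are comparable.
   Totality gives nestedness by transitivity; conversely, v_y ∈ N(u_y) by
   reflexivity, so N(u_y) ⊆ N(u_x) forces x <= y. *)

Section NestedNeighbourhoods.

Variables (T : finType) (le : rel T).

Lemma NC_nbhd_left_antitone : transitive le ->
  forall x y, le x y -> nbhd_left (G := NC le) y \subset nbhd_left (G := NC le) x.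
Proof.
move=> le_tr x y le_xy; apply/subsetP => v; rewrite !inE /=.
exact: le_tr le_xy.
Qed.

Lemma NC_nbhd_right_monotone : transitive le ->
  forall x y, le x y ->
  nbhd_right (G := NC le) (VCopy x) \subset nbhd_right (G := NC le) (VCopy y).
Proof.
move=> le_tr x y le_xy; apply/subsetP => u; rewrite !inE /= => le_ux.
exact: le_tr le_ux le_xy.
Qed.

Lemma NC_nbhd_left_subset_le : reflexive le ->
  forall x y, nbhd_left (G := NC le) y \subset nbhd_left (G := NC le) x -> le x y.
Proof.
move=> le_refl x y /subsetP sub_yx.
by have := sub_yx (VCopy y); rewrite !inE /= le_refl; apply.
Qed.

Lemma total_NC_chain_graph : transitive le -> total le -> chain_graph (NC le).
Proof.
move=> le_tr le_total; split => [x y | [x] [y]].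
  by case/orP: (le_total x y) => /(NC_nbhd_left_antitone le_tr) ->; rewrite ?orbT.
by case/orP: (le_total x y) => /(NC_nbhd_right_monotone le_tr) ->; rewrite ?orbT.
Qed.

Lemma NC_chain_graph_total : reflexive le -> chain_graph (NC le) -> total le.
Proof.
move=> le_refl [nested_left _] x y.
by case/orP: (nested_left x y) => /(NC_nbhd_left_subset_le le_refl) ->; rewrite ?orbT.
Qed.

Lemma linear_order_iff_total : partial_order le -> linear_order le <-> total le.
Proof.
move=> po; split=> [[_ le_total] x y | le_total]; last by split=> // x y _.
by case: (eqVneq x y) => [-> | /le_total //]; rewrite (proj1 po).
Qed.

End NestedNeighbourhoods.

Theorem lemma9 (T : finType) (le : rel T) :
  partial_order le -> (linear_order le <-> chain_graph (NC le)).
Proof.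
move=> po; have [le_refl [_ le_tr]] := po.
split=> [/(linear_order_iff_total po) | /(NC_chain_graph_total le_refl)].
- exact: total_NC_chain_graph.
- by move/(linear_order_iff_total po).
Qed.
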